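(* Let $(u_\beta)_{\beta<\alpha}$ be a non-increasing (for $\le_{lex}$) sequence of prime words. If $\alpha\ge2$, then the product $\prod_{\beta<\alpha}u_\beta$ is not prime.
   Context: $A$ is a finite alphabet with a linear order $<_A$. Words are sequences of letters indexed by countable ordinals; $\prod$ is ordered concatenation and $x^\alpha$ the concatenation of $\alpha$ copies of $x$. A suffix of $x$ is $x[\gamma,|x|)$, proper if $0<\gamma<|x|$. Write $x<_{str}x'$ if there are letters $a<_Ab$ and words $y,z,z'$ with $x=yaz$, $x'=ybz'$; $x\le_{lex}x'$ iff $x$ is a prefix of $x'$ or $x<_{str}x'$. A word is primitive if $x=y^\alpha$ implies $\alpha=1$ and $y=x$; $w$ is prime if it is primitive and every proper suffix $z$ satisfies $w\le_{lex}z$. A sequence is non-increasing if $\beta<\beta'$ implies $u_\beta\ge_{lex}u_{\beta'}$. *)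

From mathcomp Require Import all_boot all_order.
From Stdlib Require Import Relations.Relation_Operators.
Set Implicit Arguments. Unset Strict Implicit. Unset Printing Implicit Defensive.
Import Order.TTheory.

(* An ordinal is represented by a (strictly) well-ordered type; a word of
   length alpha is a labelling of the positions of such a well-order.
   Words / ordinals are identified up to (label-preserving) order isomorphism. *)
Record wo := WO { car : Type; rel : car -> car -> Prop }.
Arguments rel : clear implicits.

Definition is_wo (a : wo) : Prop :=
  (forall x, ~ rel a x x) /\
  (forall x y z, rel a x y -> rel a y z -> rel a x z) /\
  (forall x y, rel a x y \/ x = y \/ rel a y x) /\
  well_founded (rel a) /\
  (exists f : car a -> nat, forall x y, f x = f y -> x = y).

Definition wo_iso (a b : wo) : Prop :=
  exists f : car a -> car b, bijective f /\ forall x y, rel a x y <-> rel b (f x) (f y).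

Definition one : wo := @WO unit (fun _ _ => False).
Definition two : wo := @WO bool (fun b c => ~~ b && c).

Definition wo_sum (a : wo) (B : car a -> wo) : wo :=
  @WO {b : car a & car (B b)}
      (lexprod (car a) (fun b => car (B b)) (rel a) (fun b => rel (B b))).
Arguments wo_sum : clear implicits.

Section Words.
Context {d : Order.disp_t} {A : finOrderType d}.

Record word := Word { wshape : wo; lab : car wshape -> A }.
Arguments lab : clear implicits.
Definition pos (w : word) := car (wshape w).
Definition wlt (w : word) := rel (wshape w).
Arguments wlt : clear implicits.
Definition valid (w : word) : Prop := is_wo (wshape w).

Definition word_iso (x y : word) : Prop :=
  exists f : pos x -> pos y, bijective f /\
    (forall p q, wlt x p q <-> wlt y (f p) (f q)) /\
    (forall p, lab y (f p) = lab x p).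

Definition wprod (a : wo) (u : car a -> word) : word :=
  @Word (wo_sum a (fun b => wshape (u b))) (fun p => lab (u (projT1 p)) (projT2 p)).

Arguments wprod : clear implicits.
Definition wpow (x : word) (a : wo) : word := wprod a (fun _ => x).
Definition wcat (x y : word) : word := wprod two (fun b => if b then y else x).
Definition letter (c : A) : word := @Word one (fun _ => c).

Definition suffix (x : word) (g : pos x) : word :=
  @Word (@WO {p : pos x | ~ wlt x p g} (fun p q => wlt x (sval p) (sval q)))
        (fun p => lab x (sval p)).
Definition proper_pos (x : word) (g : pos x) : Prop := exists p, wlt x p g.

Definition is_prefix (x x' : word) : Prop :=
  exists z, valid z /\ word_iso x' (wcat x z).

Definition str_lt (x x' : word) : Prop :=
  exists (a b : A) (y z z' : word), (a < b)%O /\ valid y /\ valid z /\ valid z' /\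
    word_iso x (wcat (wcat y (letter a)) z) /\
    word_iso x' (wcat (wcat y (letter b)) z').

Definition lex_le (x x' : word) : Prop := is_prefix x x' \/ str_lt x x'.

Definition primitive (x : word) : Prop :=
  forall (y : word) (a : wo), valid y -> is_wo a -> word_iso x (wpow y a) ->
    wo_iso a one /\ word_iso y x.

Definition prime_word (w : word) : Prop :=
  primitive w /\ forall g : pos w, proper_pos g -> lex_le w (suffix g).

Definition nonincreasing (a : wo) (u : car a -> word) : Prop :=
  forall b b', rel a b b' -> lex_le (u b') (u b).

End Words.
Arguments lab {d A} w _.
Arguments wlt {d A} w _ _.
Arguments wprod {d A} a u.

(* Let w be the product, b0 the first index and x = u_b0, and suppose w is prime.
   Every factor u_b is <=lex x, and a strict mismatch with x would make the suffix
   of w starting at u_b smaller than w; so every factor is a prefix of x. If every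
   factor is all of x, then w is a power x^alpha with alpha >= 2, which is not
   primitive. Otherwise let cs be the least position of x missed by some factor
   u_bs. From bs on, every factor is a copy of the proper prefix v = x[0,cs), and
   the suffix s of w starting at u_bs satisfies x <=lex s, because w <=lex s and w
   starts with x. This is impossible: x cannot end inside the shorter first
   factor of s; a mismatch of x against a later factor of s, or x ending inside a
   last factor of s, yields a proper suffix of x, starting where that factor
   starts, which is below x; and if x runs through infinitely many factors with
   no last one, x itself is a power of v. *)

From mathcomp Require Import all_boot all_order.
From Stdlib Require Import Relations.Relation_Operators.
From Stdlib Require Import Wellfounded.Lexicographic_Product Wellfounded.Inverse_Image.
From Stdlib Require Import Classical ClassicalEpsilon ProofIrrelevance Eqdep.
Set Implicit Arguments. Unset Strict Implicit. Unset Printing Implicit Defensive.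
Import Order.TTheory.

(** * Well-orders *)

(* [is_wo] without countability, which only matters where [primitive] is invoked. *)
Definition well_ordered (a : wo) : Prop :=
  well_founded (rel a) /\ (forall x y, rel a x y \/ x = y \/ rel a y x) /\
  (forall x y z, rel a x y -> rel a y z -> rel a x z).

Lemma is_wo_well_ordered (a : wo) : is_wo a -> well_ordered a.
Proof. intros [_ [Htr [Htot [Hwf _]]]]; exact (conj Hwf (conj Htot Htr)). Qed.

Lemma wf_irrefl T (R : T -> T -> Prop) : well_founded R -> forall x, ~ R x x.
Proof.
intros Hwf x; induction x as [x IH] using (well_founded_ind Hwf).
intros Hx; exact (IH x Hx Hx).
Qed.

Lemma wf_min T (R : T -> T -> Prop) (P : T -> Prop) : well_founded R ->
  (exists x, P x) -> exists x, P x /\ forall y, R y x -> ~ P y.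
Proof.
intros Hwf [x Hx]; induction x as [x IH] using (well_founded_ind Hwf).
destruct (classic (exists y, R y x /\ P y)) as [[y [Hy Py]]|N].
- exact (IH y Hy Py).
- exists x; split; [exact Hx|]; intros y Hy Py; apply N; eauto.
Qed.

Lemma wf_bottom T (R : T -> T -> Prop) : well_founded R -> T -> exists m, forall y, ~ R y m.
Proof.
intros Hwf x; destruct (wf_min (P := fun _ => True) Hwf (ex_intro _ x I)) as [m [_ Hm]].
exists m; intros y Hy; exact (Hm y Hy I).
Qed.

Lemma wo_sum_inv (a : wo) (B : car a -> wo) x y : rel (wo_sum a B) x y ->
  rel a (projT1 x) (projT1 y) \/
  exists b p p', x = existT _ b p /\ y = existT _ b p' /\ rel (B b) p p'.
Proof. intros [b b' p p' H|b p p' H]; [left | right; exists b, p, p']; auto. Qed.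

Lemma wo_sum_same (a : wo) (B : car a -> wo) b p p' : ~ rel a b b ->
  rel (wo_sum a B) (existT _ b p) (existT _ b p') <-> rel (B b) p p'.
Proof.
intros Hirr; split; [|intros H; apply right_lex; exact H].
intros H; destruct (wo_sum_inv H) as [H1|[b0 [q [q' [E1 [E2 H2]]]]]]; [contradiction|].
injection E1 as <- E1; apply inj_pairT2 in E1; apply inj_pairT2 in E2; subst; exact H2.
Qed.

Lemma well_ordered_sum (a : wo) (B : car a -> wo) :
  well_ordered a -> (forall b, well_ordered (B b)) -> well_ordered (wo_sum a B).
Proof.
intros [Hwf [Htot Htr]] HB; split; [|split].
- apply wf_lexprod; [exact Hwf|]; intros b; apply HB.
- intros [b p] [b' p']; destruct (Htot b b') as [H|[<-|H]].
  + left; apply left_lex; exact H.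
  + destruct (proj1 (proj2 (HB b)) p p') as [H|[<-|H]].
    * left; apply right_lex; exact H.
    * right; left; reflexivity.
    * right; right; apply right_lex; exact H.
  + right; right; apply left_lex; exact H.
- intros x y z H1 H2.
  destruct (wo_sum_inv H1) as [K1|[b [p [p' [-> [-> K1]]]]]];
  destruct (wo_sum_inv H2) as [K2|[b2 [q [q' [F1 [-> K2]]]]]].
  + destruct x, z; apply left_lex; simpl in *; eauto.
  + subst y; destruct x; apply left_lex; exact K1.
  + destruct z; apply left_lex; exact K2.
  + injection F1 as <- F1; apply inj_pairT2 in F1; subst q.
    apply right_lex; exact (proj2 (proj2 (HB b)) _ _ _ K1 K2).
Qed.

Lemma well_ordered_one : well_ordered one.
Proof.
split; [|split].
- intros x; constructor; intros y [].
- intros [] []; auto.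
- intros ? ? ? [].
Qed.

Lemma is_wo_two : is_wo two.
Proof.
split; [|split; [|split; [|split]]].
- intros []; simpl; discriminate.
- intros [] [] []; simpl; auto.
- intros [] []; simpl; auto.
- intros x; constructor; intros y; destruct x, y; simpl; try discriminate.
  intros _; constructor; intros []; simpl; discriminate.
- exists (fun b : bool => if b then 1 else 0); intros [] []; simpl; auto; discriminate.
Qed.

Definition subwo (a : wo) (P : car a -> Prop) : wo :=
  @WO {k : car a | P k} (fun k k' => rel a (proj1_sig k) (proj1_sig k')).
Arguments subwo : clear implicits.

Lemma is_wo_subwo (a : wo) (P : car a -> Prop) : is_wo a -> is_wo (subwo a P).
Proof.
intros [Hirr [Htr [Htot [Hwf [f Hf]]]]]; split; [|split; [|split; [|split]]].
- intros [k Hk]; apply Hirr.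
- intros [k Hk] [k' Hk'] [k'' Hk'']; apply Htr.
- intros [k Hk] [k' Hk']; simpl; destruct (Htot k k') as [L|[<-|L]]; auto.
  right; left; f_equal; apply proof_irrelevance.
- exact (wf_inverse_image _ _ (rel a) (@proj1_sig _ _) Hwf).
- exists (fun k => f (proj1_sig k)); intros [k Hk] [k' Hk'] E; simpl in E.
  apply Hf in E; subst; f_equal; apply proof_irrelevance.
Qed.

Lemma wo_iso_one_eq (a : wo) (k1 k2 : car a) : wo_iso a one -> k1 = k2.
Proof.
intros [f [[g Hfg _] _]]; rewrite -(Hfg k1) -(Hfg k2); destruct (f k1), (f k2); reflexivity.
Qed.

(** * Matched positions of two words *)

Section Matching.
Context {d : Order.disp_t} {A : finOrderType d}.
Local Notation word := (@word d A).
Local Notation ordered X := (well_ordered (wshape X)).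

Lemma well_ordered_wprod (a : wo) (u : car a -> word) :
  well_ordered a -> (forall b, ordered (u b)) -> ordered (wprod a u).
Proof. intros Ha Hu; exact (well_ordered_sum Ha Hu). Qed.

Lemma well_ordered_wcat (X Z : word) : ordered X -> ordered Z -> ordered (wcat X Z).
Proof.
intros HX HZ; apply well_ordered_wprod; [exact (is_wo_well_ordered is_wo_two)|].
intros []; assumption.
Qed.

Lemma well_ordered_letter (c : A) : ordered (letter c).
Proof. exact well_ordered_one. Qed.

Lemma well_ordered_suffix (X : word) (g : pos X) : ordered X -> ordered (suffix g).
Proof.
intros [Hwf [Htot Htr]]; split; [|split].
- exact (wf_inverse_image _ _ (wlt X) (@proj1_sig _ _) Hwf).
- intros [p Hp] [q Hq]; unfold wlt; simpl; destruct (Htot p q) as [H|[<-|H]]; auto.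
  right; left; f_equal; apply proof_irrelevance.
- intros [p Hp] [q Hq] [r Hr]; apply Htr.
Qed.

(* [matched X Y p q]: the prefixes of [X] and [Y] ending at [p] and [q] (inclusive)
   are isomorphic, by an isomorphism sending [p] to [q]. *)
Local Unset Implicit Arguments.
Inductive matched (X Y : word) : pos X -> pos Y -> Prop :=
  Matched p q : lab X p = lab Y q ->
    (forall p', wlt X p' p -> exists2 q', wlt Y q' q & matched X Y p' q') ->
    (forall q', wlt Y q' q -> exists2 p', wlt X p' p & matched X Y p' q') ->
    matched X Y p q.
Local Set Implicit Arguments.

(* The same for the prefixes ending strictly before [p] and [q]. *)
Definition aligned (X Y : word) (p : pos X) (q : pos Y) : Prop :=
  (forall p', wlt X p' p -> exists2 q', wlt Y q' q & matched X Y p' q') /\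
  (forall q', wlt Y q' q -> exists2 p', wlt X p' p & matched X Y p' q').
#[global] Arguments aligned : clear implicits.

Lemma matchedE X Y p q : matched X Y p q <-> lab X p = lab Y q /\ aligned X Y p q.
Proof.
split; [intros []; repeat split; assumption|].
intros [L [H1 H2]]; constructor; assumption.
Qed.

Lemma matched_lab X Y p q : matched X Y p q -> lab X p = lab Y q.
Proof. intros H; apply matchedE in H; apply H. Qed.

Lemma matched_aligned X Y p q : matched X Y p q -> aligned X Y p q.
Proof. intros H; apply matchedE in H; apply H. Qed.

Lemma matched_down X Y p q q' :
  matched X Y p q -> wlt Y q' q -> exists2 p', wlt X p' p & matched X Y p' q'.
Proof. intros H Hq; apply matchedE in H as [_ [_ H]]; exact (H q' Hq). Qed.

Lemma matched_refl X p : ordered X -> matched X X p p.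
Proof.
intros [Hwf _]; induction p as [p IH] using (well_founded_ind Hwf).
constructor; [reflexivity| |]; intros p' Hp'; exists p'; auto.
Qed.

Lemma matched_sym X Y p q : ordered X -> matched X Y p q -> matched Y X q p.
Proof.
intros [Hwf _]; revert q; induction p as [p IH] using (well_founded_ind Hwf).
intros q H; apply matchedE in H as [L [H1 H2]]; constructor; [symmetry; exact L| |].
- intros q' Hq'; destruct (H2 q' Hq') as [p' Hp' Hm]; exists p'; auto.
- intros p' Hp'; destruct (H1 p' Hp') as [q' Hq' Hm]; exists q'; auto.
Qed.

Lemma aligned_sym X Y p q : ordered X -> aligned X Y p q -> aligned Y X q p.
Proof.
intros HX [H1 H2]; split.
- intros q' Hq'; destruct (H2 q' Hq') as [p' Hp' Hm]; exists p'; [|apply matched_sym]; auto.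
- intros p' Hp'; destruct (H1 p' Hp') as [q' Hq' Hm]; exists q'; [|apply matched_sym]; auto.
Qed.

Lemma matched_trans X Y Z p q r :
  ordered X -> matched X Y p q -> matched Y Z q r -> matched X Z p r.
Proof.
intros [Hwf _]; revert q r; induction p as [p IH] using (well_founded_ind Hwf).
intros q r H1 H2; apply matchedE in H1 as [L1 [A1 B1]]; apply matchedE in H2 as [L2 [A2 B2]].
constructor; [congruence| |].
- intros p' Hp'; destruct (A1 p' Hp') as [q' Hq' Hm].
  destruct (A2 q' Hq') as [r' Hr' Hm']; exists r'; eauto.
- intros r' Hr'; destruct (B2 r' Hr') as [q' Hq' Hm].
  destruct (B1 q' Hq') as [p' Hp' Hm']; exists p'; eauto.
Qed.

Lemma aligned_matched_trans X Y Z p q r :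
  ordered X -> aligned X Y p q -> matched Y Z q r -> aligned X Z p r.
Proof.
intros HX [H1 H2] H; apply matched_aligned in H as [H3 H4]; split.
- intros p' Hp'; destruct (H1 p' Hp') as [q' Hq' Hm].
  destruct (H3 q' Hq') as [r' Hr' Hm']; exists r'; [|apply (matched_trans HX Hm)]; assumption.
- intros r' Hr'; destruct (H4 r' Hr') as [q' Hq' Hm].
  destruct (H2 q' Hq') as [p' Hp' Hm']; exists p'; [|apply (matched_trans HX Hm')]; assumption.
Qed.

Lemma matched_aligned_trans X Y Z p q r :
  ordered X -> matched X Y p q -> aligned Y Z q r -> aligned X Z p r.
Proof.
intros HX H [H1 H2]; apply matched_aligned in H as [H3 H4]; split.
- intros p' Hp'; destruct (H3 p' Hp') as [q' Hq' Hm].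
  destruct (H1 q' Hq') as [r' Hr' Hm']; exists r'; [|apply (matched_trans HX Hm)]; assumption.
- intros r' Hr'; destruct (H2 r' Hr') as [q' Hq' Hm].
  destruct (H4 q' Hq') as [p' Hp' Hm']; exists p'; [|apply (matched_trans HX Hm')]; assumption.
Qed.

Lemma aligned_fun X Y p q1 q2 :
  ordered X -> ordered Y -> aligned X Y p q1 -> aligned X Y p q2 -> q1 = q2.
Proof.
intros [Hwf _] [HYwf [HYtot _]]; revert q1 q2.
induction p as [p IH] using (well_founded_ind Hwf).
assert (Hlt : forall q1 q2, aligned X Y p q1 -> aligned X Y p q2 -> ~ wlt Y q1 q2).
{ intros q1 q2 [H11 _] [_ H22] Hq.
  destruct (H22 q1 Hq) as [p' Hp' Hm]; destruct (H11 p' Hp') as [q' Hq' Hm'].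
  rewrite (IH p' Hp' q1 q' (matched_aligned Hm) (matched_aligned Hm')) in Hq'.
  exact (wf_irrefl HYwf Hq'). }
intros q1 q2 H1 H2; destruct (HYtot q1 q2) as [Hq|[E|Hq]]; [| exact E |];
  exfalso; [exact (Hlt _ _ H1 H2 Hq) | exact (Hlt _ _ H2 H1 Hq)].
Qed.

Lemma matched_fun X Y p q1 q2 :
  ordered X -> ordered Y -> matched X Y p q1 -> matched X Y p q2 -> q1 = q2.
Proof. intros HX HY H1 H2; exact (aligned_fun HX HY (matched_aligned H1) (matched_aligned H2)). Qed.

Lemma aligned_inj X Y p1 p2 q :
  ordered X -> ordered Y -> aligned X Y p1 q -> aligned X Y p2 q -> p1 = p2.
Proof. intros HX HY H1 H2; exact (aligned_fun HY HX (aligned_sym HX H1) (aligned_sym HX H2)). Qed.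

Lemma matched_inj X Y p1 p2 q :
  ordered X -> ordered Y -> matched X Y p1 q -> matched X Y p2 q -> p1 = p2.
Proof. intros HX HY H1 H2; exact (aligned_inj HX HY (matched_aligned H1) (matched_aligned H2)). Qed.

Lemma aligned_self X p q : ordered X -> aligned X X p q -> p = q.
Proof. intros HX H; exact (aligned_fun HX HX (matched_aligned (matched_refl p HX)) H). Qed.

Lemma aligned_lt X Y p q p' q' : ordered X -> ordered Y ->
  aligned X Y p q -> wlt X p' p -> aligned X Y p' q' -> matched X Y p' q' /\ wlt Y q' q.
Proof.
intros HX HY [H1 _] Hlt H'; destruct (H1 p' Hlt) as [q'' Hq Hm].
rewrite -(aligned_fun HX HY (matched_aligned Hm) H'); auto.
Qed.

Lemma matched_lt_mono X Y p q p' q' : ordered X -> ordered Y ->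
  matched X Y p q -> matched X Y p' q' -> wlt X p' p -> wlt Y q' q.
Proof.
intros HX HY H H' Hlt.
exact (proj2 (aligned_lt HX HY (matched_aligned H) Hlt (matched_aligned H'))).
Qed.

Lemma matched_lt X Y p q p' q' : ordered X -> ordered Y ->
  matched X Y p q -> matched X Y p' q' -> wlt X p' p <-> wlt Y q' q.
Proof.
intros HX HY H H'; split; [exact (matched_lt_mono HX HY H H')|].
exact (matched_lt_mono HY HX (matched_sym HX H) (matched_sym HX H')).
Qed.

Lemma aligned_le_down X Y p q q' : ordered X -> ordered Y ->
  aligned X Y p q -> ~ wlt Y q q' -> exists2 p', ~ wlt X p p' & aligned X Y p' q'.
Proof.
intros [HXwf [_ HXtr]] [_ [HYtot _]] Hal Hq.
destruct (HYtot q' q) as [L|[->|L]];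
  [| exists p; [apply (wf_irrefl HXwf)|exact Hal] | contradiction].
destruct (proj2 Hal q' L) as [p' Hp' Hm]; exists p'; [|exact (matched_aligned Hm)].
intros Hpp; exact (wf_irrefl HXwf (HXtr _ _ _ Hp' Hpp)).
Qed.

Lemma aligned_lt_r X Y p q p' q' : ordered X -> ordered Y ->
  aligned X Y p q -> matched X Y p' q' -> wlt Y q' q -> wlt X p' p.
Proof.
intros HX HY Hal Hm L; destruct (proj2 Hal q' L) as [p'' Hp'' Hm'].
rewrite (matched_inj HX HY Hm Hm'); exact Hp''.
Qed.

End Matching.

(** * Transferring matchings along embeddings *)

Section Embeddings.
Context {d : Order.disp_t} {A : finOrderType d}.
Local Notation word := (@word d A).
Local Notation ordered X := (well_ordered (wshape X)).

Definition init_emb (X' X : word) (e : pos X' -> pos X) : Prop :=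
  (forall p q, wlt X' p q <-> wlt X (e p) (e q)) /\
  (forall p y, wlt X y (e p) -> exists p', e p' = y) /\
  (forall p, lab X (e p) = lab X' p).
#[global] Arguments init_emb : clear implicits.

(* [e] maps [X'] onto the final part of [X] starting at [e p0], where [p0] is the
   first position of [X']. *)
Definition interval_emb (X' X : word) (e : pos X' -> pos X) (p0 : pos X') : Prop :=
  (forall p q, wlt X' p q <-> wlt X (e p) (e q)) /\
  (forall p y, ~ wlt X y (e p0) -> wlt X y (e p) -> exists p', e p' = y) /\
  (forall p, lab X (e p) = lab X' p) /\
  (forall p, ~ wlt X' p p0).
#[global] Arguments interval_emb : clear implicits.

Lemma init_emb_comp (X1 X2 X3 : word) e1 e2 :
  init_emb X1 X2 e1 -> init_emb X2 X3 e2 -> init_emb X1 X3 (fun p => e2 (e1 p)).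
Proof.
intros [H1 [D1 L1]] [H2 [D2 L2]]; split; [|split].
- intros p q; rewrite H1 H2; reflexivity.
- intros p y Hy; destruct (D2 _ _ Hy) as [z <-]; apply H2 in Hy.
  destruct (D1 _ _ Hy) as [p' <-]; eauto.
- intros p; rewrite L2 L1; reflexivity.
Qed.

Lemma iso_init_emb (X Y : word) f : bijective f ->
  (forall p q, wlt X p q <-> wlt Y (f p) (f q)) -> (forall p, lab Y (f p) = lab X p) ->
  init_emb X Y f.
Proof.
intros [g _ Hgf] Ho Hl; split; [|split]; auto.
intros p y _; exists (g y); auto.
Qed.

Lemma matched_init_emb (X' X Y : word) e p q : ordered X' -> init_emb X' X e ->
  matched X' Y p q <-> matched X Y (e p) q.
Proof.
intros [Hwf _] [Hemb [Hdown Hlab]]; revert q.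
induction p as [p IH] using (well_founded_ind Hwf).
intros q; split; intros H; apply matchedE in H as [L [H1 H2]]; constructor.
- rewrite Hlab; exact L.
- intros y Hy; destruct (Hdown p y Hy) as [p' <-]; apply Hemb in Hy.
  destruct (H1 p' Hy) as [q' Hq' Hm]; exists q'; [|apply IH]; assumption.
- intros q' Hq'; destruct (H2 q' Hq') as [p' Hp' Hm]; exists (e p').
  + apply Hemb; exact Hp'.
  + apply IH; assumption.
- rewrite -Hlab; exact L.
- intros p' Hp'; destruct (H1 (e p') (proj1 (Hemb p' p) Hp')) as [q' Hq' Hm].
  exists q'; [|apply IH]; assumption.
- intros q' Hq'; destruct (H2 q' Hq') as [y Hy Hm]; destruct (Hdown p y Hy) as [p' <-].
  apply Hemb in Hy; exists p'; [|apply IH]; assumption.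
Qed.

Lemma init_emb_id (X : word) : init_emb X X id.
Proof. split; [|split]; [reflexivity | intros p y _; exists y; reflexivity | reflexivity]. Qed.

Lemma matched_init_embs (Z X Y : word) e f p : ordered Z ->
  init_emb Z X e -> init_emb Z Y f -> matched X Y (e p) (f p).
Proof.
intros [Hwf _] [He [De Le]] [Hf [Df Lf]].
induction p as [p IH] using (well_founded_ind Hwf); constructor.
- rewrite Le Lf; reflexivity.
- intros y Hy; destruct (De _ _ Hy) as [p' <-]; apply He, Hf in Hy.
  exists (f p'); [exact Hy | apply IH; apply Hf; exact Hy].
- intros y Hy; destruct (Df _ _ Hy) as [p' <-]; apply Hf, He in Hy.
  exists (e p'); [exact Hy | apply IH; apply He; exact Hy].
Qed.

Lemma aligned_init_emb (X' X Y : word) e p q : ordered X' -> init_emb X' X e ->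
  aligned X' Y p q <-> aligned X Y (e p) q.
Proof.
intros HX' He; pose proof He as [Hemb [Hdown _]].
split; intros [H1 H2]; split.
- intros y Hy; destruct (Hdown p y Hy) as [p' <-]; apply Hemb in Hy.
  destruct (H1 p' Hy) as [q' Hq' Hm]; exists q'; [|apply (matched_init_emb _ _ HX' He)]; assumption.
- intros q' Hq'; destruct (H2 q' Hq') as [p' Hp' Hm]; exists (e p').
  + apply Hemb; exact Hp'.
  + apply (matched_init_emb _ _ HX' He); exact Hm.
- intros p' Hp'; destruct (H1 (e p') (proj1 (Hemb p' p) Hp')) as [q' Hq' Hm].
  exists q'; [|apply (matched_init_emb _ _ HX' He)]; assumption.
- intros q' Hq'; destruct (H2 q' Hq') as [y Hy Hm]; destruct (Hdown p y Hy) as [p' <-].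
  apply Hemb in Hy; exists p'; [|apply (matched_init_emb _ _ HX' He)]; assumption.
Qed.

Lemma aligned_init_emb_r (X' X Y : word) e p q : ordered X' -> ordered X -> ordered Y ->
  init_emb X' X e -> aligned Y X' q p <-> aligned Y X q (e p).
Proof.
intros HX' HX HY He; split; intros H; apply (aligned_sym HY) in H.
- apply (aligned_sym HX); apply (aligned_init_emb _ _ HX' He); exact H.
- apply (aligned_sym HX'); apply (aligned_init_emb _ _ HX' He); exact H.
Qed.

Lemma interval_emb_below (X' X : word) e p0 p y : ordered X' -> ordered X ->
  interval_emb X' X e p0 -> wlt X y (e p0) -> wlt X y (e p).
Proof.
intros [_ [Htot _]] [_ [_ Htr]] [Hemb [_ [_ Hp0]]] Hy.
destruct (Htot p0 p) as [H|[<-|H]]; [exact (Htr _ _ _ Hy (proj1 (Hemb _ _) H)) | exact Hy |].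
destruct (Hp0 p H).
Qed.

Section IntervalTransfer.
Variables (X' X Y' Y : word) (e : pos X' -> pos X) (f : pos Y' -> pos Y).
Variables (p0 : pos X') (q0 : pos Y').
Hypotheses (HX' : ordered X') (HX : ordered X) (HY' : ordered Y') (HY : ordered Y).
Hypotheses (He : interval_emb X' X e p0) (Hf : interval_emb Y' Y f q0).
Hypothesis Hstart : aligned X Y (e p0) (f q0).

(* Positions below the aligned starting points are matched to each other, so no
   position of the images can be matched to one of them. *)
Lemma interval_lift_l p y q : wlt X y (e p) -> matched X Y y (f q) ->
  exists2 p', wlt X' p' p & e p' = y.
Proof.
intros Hy Hm; pose proof He as [Hemb [Hconv _]]; pose proof Hf as [Hfemb [_ [_ Hq0]]].
destruct (classic (wlt X y (e p0))) as [Hy0|Hy0].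
- exfalso; destruct (proj1 Hstart y Hy0) as [z Hz Hm'].
  rewrite -(matched_fun HX HY Hm Hm') in Hz; apply Hfemb in Hz; exact (Hq0 _ Hz).
- destruct (Hconv p y Hy0 Hy) as [p' <-]; exists p'; [apply Hemb|]; auto.
Qed.

Lemma interval_lift_r q z p : wlt Y z (f q) -> matched X Y (e p) z ->
  exists2 q', wlt Y' q' q & f q' = z.
Proof.
intros Hz Hm; pose proof He as [Hemb [_ [_ Hp0]]]; pose proof Hf as [Hfemb [Hconv _]].
destruct (classic (wlt Y z (f q0))) as [Hz0|Hz0].
- exfalso; destruct (proj2 Hstart z Hz0) as [y Hy Hm'].
  rewrite -(matched_inj HX HY Hm Hm') in Hy; apply Hemb in Hy; exact (Hp0 _ Hy).
- destruct (Hconv q z Hz0 Hz) as [q' <-]; exists q'; [apply Hfemb|]; auto.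
Qed.

Lemma matched_interval_emb p q : matched X' Y' p q <-> matched X Y (e p) (f q).
Proof.
pose proof He as [Hemb [Hconv [Hel _]]]; pose proof Hf as [Hfemb [Hfconv [Hfl _]]].
pose proof HX' as [Hwf _]; revert q.
induction p as [p IH] using (well_founded_ind Hwf).
intros q; split; intros H; apply matchedE in H as [L [H1 H2]]; constructor.
- rewrite Hel Hfl; exact L.
- intros y Hy; destruct (classic (wlt X y (e p0))) as [Hy0|Hy0].
  + destruct (proj1 Hstart y Hy0) as [q' Hq' Hm]; exists q'; [|exact Hm].
    exact (interval_emb_below q HY' HY Hf Hq').
  + destruct (Hconv p y Hy0 Hy) as [p' <-]; apply Hemb in Hy.
    destruct (H1 p' Hy) as [q' Hq' Hm]; exists (f q'); [apply Hfemb; exact Hq'|].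
    apply IH; assumption.
- intros z Hz; destruct (classic (wlt Y z (f q0))) as [Hz0|Hz0].
  + destruct (proj2 Hstart z Hz0) as [p' Hp' Hm]; exists p'; [|exact Hm].
    exact (interval_emb_below p HX' HX He Hp').
  + destruct (Hfconv q z Hz0 Hz) as [q' <-]; apply Hfemb in Hz.
    destruct (H2 q' Hz) as [p' Hp' Hm]; exists (e p'); [apply Hemb; exact Hp'|].
    apply IH; assumption.
- rewrite -Hel -Hfl; exact L.
- intros p' Hp'; destruct (H1 _ (proj1 (Hemb _ _) Hp')) as [z Hz Hm].
  destruct (interval_lift_r Hz Hm) as [q' Hq' <-]; exists q'; [|apply IH]; assumption.
- intros q' Hq'; destruct (H2 _ (proj1 (Hfemb _ _) Hq')) as [y Hy Hm].
  destruct (interval_lift_l Hy Hm) as [p' Hp' <-]; exists p'; [|apply IH]; assumption.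
Qed.

Lemma aligned_interval_emb p q : aligned X Y (e p) (f q) -> aligned X' Y' p q.
Proof.
pose proof He as [Hemb _]; pose proof Hf as [Hfemb _].
intros [H1 H2]; split.
- intros p' Hp'; destruct (H1 _ (proj1 (Hemb _ _) Hp')) as [z Hz Hm].
  destruct (interval_lift_r Hz Hm) as [q' Hq' <-].
  exists q'; [|apply matched_interval_emb]; assumption.
- intros q' Hq'; destruct (H2 _ (proj1 (Hfemb _ _) Hq')) as [y Hy Hm].
  destruct (interval_lift_l Hy Hm) as [p' Hp' <-].
  exists p'; [|apply matched_interval_emb]; assumption.
Qed.

End IntervalTransfer.

End Embeddings.

(** * The lexicographic order through aligned positions *)

Section LexOrder.
Context {d : Order.disp_t} {A : finOrderType d}.
Local Notation word := (@word d A).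
Local Notation ordered X := (well_ordered (wshape X)).

Definition aligned_prefix (X Y : word) : Prop := forall p, exists q, matched X Y p q.
Definition aligned_str_lt (X Y : word) : Prop :=
  exists p q, aligned X Y p q /\ (lab X p < lab Y q)%O.
Definition aligned_lex_le (X Y : word) : Prop := aligned_prefix X Y \/ aligned_str_lt X Y.

Lemma aligned_prefix_trans (X Y Z : word) :
  ordered X -> aligned_prefix X Y -> aligned_prefix Y Z -> aligned_prefix X Z.
Proof.
intros HX HXY HYZ p; destruct (HXY p) as [q Hq]; destruct (HYZ q) as [r Hr].
exists r; exact (matched_trans HX Hq Hr).
Qed.

Lemma init_emb_aligned_prefix (X Y : word) e :
  ordered X -> init_emb X Y e -> aligned_prefix X Y.
Proof.
intros HX He p; exists (e p); exact (matched_init_embs p HX (init_emb_id X) He).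
Qed.

Lemma word_iso_aligned_prefix (X Y : word) :
  ordered X -> word_iso X Y -> aligned_prefix X Y /\ aligned_prefix Y X.
Proof.
intros HX [f [Hbij [Ho Hl]]]; pose proof (iso_init_emb Hbij Ho Hl) as He.
destruct Hbij as [g _ Hgf].
split; [exact (init_emb_aligned_prefix HX He)|].
intros q; exists (g q); apply (matched_sym HX).
rewrite -{2}(Hgf q); exact (matched_init_embs (g q) HX (init_emb_id X) He).
Qed.

Lemma aligned_str_lt_transfer (X X' Y Y' : word) : ordered X' -> ordered X ->
  aligned_prefix X' X -> aligned_prefix Y' Y -> aligned_str_lt X' Y' -> aligned_str_lt X Y.
Proof.
intros HX' HX HXX' HYY' [p' [q' [Hal L]]].
destruct (HXX' p') as [p Hp]; destruct (HYY' q') as [q Hq].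
apply (matched_sym HX') in Hp.
exists p, q; split.
- exact (aligned_matched_trans HX (matched_aligned_trans HX Hp Hal) Hq).
- rewrite (matched_lab Hp) -(matched_lab Hq); exact L.
Qed.

Lemma aligned_mismatch_unique (X Y : word) p1 q1 p2 q2 : ordered X -> ordered Y ->
  aligned X Y p1 q1 -> lab X p1 <> lab Y q1 ->
  aligned X Y p2 q2 -> lab X p2 <> lab Y q2 -> p1 = p2 /\ q1 = q2.
Proof.
intros HX HY H1 L1 H2 L2.
assert (E : p1 = p2).
{ destruct (proj1 (proj2 HX) p1 p2) as [Hl|[E|Hl]]; [exfalso| exact E | exfalso].
  - exact (L1 (matched_lab (proj1 (aligned_lt HX HY H2 Hl H1)))).
  - exact (L2 (matched_lab (proj1 (aligned_lt HX HY H1 Hl H2)))). }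
subst p2; split; [reflexivity | exact (aligned_fun HX HY H1 H2)].
Qed.

Lemma aligned_lex_le_str_ltF (X Y : word) : ordered X -> ordered Y ->
  aligned_lex_le X Y -> ~ aligned_str_lt Y X.
Proof.
intros HX HY HXY [q' [p' [H' L']]]; apply (aligned_sym HY) in H'.
assert (N' : lab X p' <> lab Y q') by (intros E; rewrite E ltxx in L'; discriminate).
destruct HXY as [HP|[p [q [H L]]]].
- destruct (HP p') as [q Hm]; apply N'.
  rewrite (aligned_fun HX HY H' (matched_aligned Hm)); exact (matched_lab Hm).
- assert (N : lab X p <> lab Y q) by (intros E; rewrite E ltxx in L; discriminate).
  destruct (aligned_mismatch_unique HX HY H N H' N') as [-> ->].
  pose proof (lt_trans L L') as F; rewrite ltxx in F; discriminate.
Qed.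

Definition cat_inl (X Z : word) (p : pos X) : pos (wcat X Z) :=
  existT (fun b : bool => car (wshape (if b then Z else X))) false p.
Definition cat_inr (X Z : word) (p : pos Z) : pos (wcat X Z) :=
  existT (fun b : bool => car (wshape (if b then Z else X))) true p.

Lemma cat_inl_init_emb (X Z : word) : init_emb X (wcat X Z) (@cat_inl X Z).
Proof.
split; [|split].
- intros p q; symmetry.
  apply (@wo_sum_same two (fun b : bool => wshape (if b then Z else X)) false p q).
  simpl; discriminate.
- intros p y Hy; destruct (wo_sum_inv Hy) as [H|[b [q [q' [E1 [E2 H]]]]]].
  + destruct y as [[] y]; simpl in H; discriminate.
  + apply (f_equal (@projT1 _ _)) in E2; simpl in E2; subst b.
    exists q; symmetry; exact E1.
- intros p; reflexivity.
Qed.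

Lemma cat_letter_below (y z : word) (c : A) v :
  wlt (wcat (wcat y (letter c)) z) v (cat_inl z (cat_inr y (tt : pos (letter c)))) ->
  exists py, v = cat_inl z (cat_inl (letter c) py).
Proof.
intros H; pose proof (cat_inl_init_emb (wcat y (letter c)) z) as [Hemb [Hdown _]].
destruct (Hdown _ _ H) as [v' <-]; apply Hemb in H.
destruct (wo_sum_inv H) as [K|[b [q [q' [E1 [E2 K]]]]]].
- destruct v' as [[] r]; simpl in K; try discriminate; exists r; reflexivity.
- apply (f_equal (@projT1 _ _)) in E2; simpl in E2; subst b; destruct K.
Qed.

Lemma aligned_cat_letter (y z z' : word) (a b : A) : ordered y ->
  aligned (wcat (wcat y (letter a)) z) (wcat (wcat y (letter b)) z')
    (cat_inl z (cat_inr y (tt : pos (letter a)))) (cat_inl z' (cat_inr y (tt : pos (letter b)))).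
Proof.
intros Hy.
pose proof (init_emb_comp (cat_inl_init_emb y (letter a)) (cat_inl_init_emb _ z)) as Ea.
pose proof (init_emb_comp (cat_inl_init_emb y (letter b)) (cat_inl_init_emb _ z')) as Eb.
assert (Hab : forall py, matched (wcat (wcat y (letter a)) z) (wcat (wcat y (letter b)) z')
          (cat_inl z (cat_inl (letter a) py)) (cat_inl z' (cat_inl (letter b) py))).
{ intros py; exact (matched_init_embs py Hy Ea Eb). }
split; intros v Hv; destruct (cat_letter_below Hv) as [py ->];
  exists (cat_inl _ (cat_inl _ py)); try exact (Hab py);
  apply cat_inl_init_emb; apply left_lex; reflexivity.
Qed.

Lemma aligned_lex_le_of_lex_le (X Y : word) :
  ordered X -> ordered Y -> lex_le X Y -> aligned_lex_le X Y.
Proof.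
intros HX HY [[z [_ Hiso]]|[a [b [y [z [z' [Hab [Hy [Hz [_ [HXiso HYiso]]]]]]]]]]].
- left; apply (aligned_prefix_trans HX (init_emb_aligned_prefix HX (cat_inl_init_emb X z))).
  exact (proj2 (word_iso_aligned_prefix HY Hiso)).
- right; apply is_wo_well_ordered in Hy, Hz.
  assert (HV : ordered (wcat (wcat y (letter a)) z)).
  { apply well_ordered_wcat; [apply well_ordered_wcat|]; auto using well_ordered_letter. }
  apply (aligned_str_lt_transfer HV HX (proj2 (word_iso_aligned_prefix HX HXiso))
           (proj2 (word_iso_aligned_prefix HY HYiso))).
  exists (cat_inl z (cat_inr y (tt : pos (letter a)))).
  exists (cat_inl z' (cat_inr y (tt : pos (letter b)))).
  split; [exact (aligned_cat_letter z z' a b Hy) | exact Hab].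
Qed.

Lemma common_prefix_not_str_lt (Y Z x : word) : ordered Y -> ordered x ->
  aligned_prefix Y x -> aligned_prefix Z x -> ~ aligned_str_lt Y Z.
Proof.
intros HY Hx HYx HZx [p [q [Hal L]]].
destruct (HYx p) as [r1 H1]; destruct (HZx q) as [r2 H2].
pose proof (aligned_fun HY Hx (matched_aligned H1) (aligned_matched_trans HY Hal H2)); subst r2.
rewrite (matched_lab H1) -(matched_lab H2) ltxx in L; discriminate.
Qed.

Lemma not_aligned_lex_le_below (x Z : word) cs : ordered x ->
  (forall t, exists2 r, wlt x r cs & matched Z x t r) -> ~ aligned_lex_le x Z.
Proof.
intros Hx HZ [HP|[q [t [Hal L]]]].
- destruct (HP cs) as [t Ht]; destruct (HZ t) as [r Hr Htr].
  rewrite (matched_fun Hx Hx (matched_trans Hx Ht Htr) (matched_refl cs Hx)) in Hr.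
  exact (wf_irrefl (proj1 Hx) Hr).
- destruct (HZ t) as [r _ Htr].
  pose proof (aligned_self Hx (aligned_matched_trans Hx Hal Htr)); subst r.
  rewrite (matched_lab Htr) ltxx in L; discriminate.
Qed.

End LexOrder.

(** * Powers and products *)

(* The empty word is its own square. *)
Lemma primitive_inhabited {d : Order.disp_t} {A : finOrderType d} (X : @word d A) :
  valid X -> primitive X -> inhabited (pos X).
Proof.
intros HX Hprim; apply NNPP; intros Hne.
assert (E : forall p : pos X, False) by (intros p; exact (Hne (inhabits p))).
destruct (Hprim X two HX is_wo_two) as [Hone _].
- exists (fun p => False_rect _ (E p)); split; [|split]; [|intros p; destruct (E p)..].
  exists (fun q : pos (wpow X two) => projT2 q); [intros p|intros [b p]]; destruct (E p).
- discriminate (wo_iso_one_eq (a := two) true false Hone).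
Qed.

Section PowerIso.
Context {d : Order.disp_t} {A : finOrderType d}.
Local Notation word := (@word d A).
Local Notation ordered X := (well_ordered (wshape X)).

(* [R q k r] reads "position [q] of [X] is position [r] of the [k]-th copy of [m]". *)
Variables (X m : word) (K : wo) (R : pos X -> car K -> pos m -> Prop).
Hypotheses (HX : ordered X) (HK : well_ordered K) (Hm : ordered m).
Hypothesis R_total : forall q, exists k r, R q k r.
Hypothesis R_onto : forall k r, exists q, R q k r.
Hypothesis R_lt : forall q k r q' k' r', R q k r -> R q' k' r' ->
  wlt X q q' <-> rel K k k' \/ (k = k' /\ wlt m r r').
Hypothesis R_lab : forall q k r, R q k r -> lab X q = lab m r.

Lemma power_rel_fun q k r k' r' : R q k r -> R q k' r' -> k = k' /\ r = r'.
Proof.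
intros H1 H2; assert (Hq : ~ wlt X q q) by apply (wf_irrefl (proj1 HX)).
destruct (proj1 (proj2 HK) k k') as [L|[<-|L]].
- exfalso; apply Hq; apply (R_lt H1 H2); left; exact L.
- split; [reflexivity|].
  destruct (proj1 (proj2 Hm) r r') as [L|[E|L]]; [exfalso | exact E | exfalso].
  + apply Hq; apply (R_lt H1 H2); right; split; [reflexivity | exact L].
  + apply Hq; apply (R_lt H2 H1); right; split; [reflexivity | exact L].
- exfalso; apply Hq; apply (R_lt H2 H1); left; exact L.
Qed.

Lemma power_rel_inj q q' k r : R q k r -> R q' k r -> q = q'.
Proof.
intros H1 H2.
assert (Hno : forall q q', R q k r -> R q' k r -> ~ wlt X q q').
{ intros p p' Hp Hp' L; apply (R_lt Hp Hp') in L as [L|[_ L]].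
  - exact (wf_irrefl (proj1 HK) L).
  - exact (wf_irrefl (proj1 Hm) L). }
destruct (proj1 (proj2 HX) q q') as [L|[E|L]]; [exfalso | exact E | exfalso].
- exact (Hno _ _ H1 H2 L).
- exact (Hno _ _ H2 H1 L).
Qed.

Lemma word_iso_wpow : word_iso X (wpow m K).
Proof.
assert (F : forall q, {kr : {k : car K & pos m} | R q (projT1 kr) (projT2 kr)}).
{ intros q; apply constructive_indefinite_description.
  destruct (R_total q) as [k [r H]]; exists (existT _ k r); exact H. }
assert (G : forall kr : {k : car K & pos m}, {q | R q (projT1 kr) (projT2 kr)}).
{ intros [k r]; apply constructive_indefinite_description; apply R_onto. }
exists (fun q => proj1_sig (F q)); split; [|split].
- exists (fun kr => proj1_sig (G kr)).
  + intros q; destruct (F q) as [[k r] H]; simpl; destruct (G (existT _ k r)) as [q' H'].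
    exact (power_rel_inj H' H).
  + intros [k r]; destruct (G (existT _ k r)) as [q H]; simpl; destruct (F q) as [[k' r'] H'].
    destruct (power_rel_fun H H') as [E1 E2]; simpl in E1, E2; subst; reflexivity.
- intros q q'; destruct (F q) as [[k r] H]; destruct (F q') as [[k' r'] H']; simpl.
  rewrite (R_lt H H'); split.
  + intros [L|[E L]]; [apply left_lex; exact L|].
    simpl in E; subst k'; apply right_lex; exact L.
  + intros L; destruct (wo_sum_inv L) as [L1|[b [p [p' [E1 [E2 L2]]]]]]; [left; exact L1|right].
    injection E1 as -> ->; injection E2 as -> ->; split; [reflexivity | exact L2].
- intros q; destruct (F q) as [[k r] H]; symmetry; exact (R_lab H).
Qed.

End PowerIso.

Section Blocks.
Context {d : Order.disp_t} {A : finOrderType d}.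
Local Notation word := (@word d A).
Local Notation ordered X := (well_ordered (wshape X)).

Lemma suffix_interval_emb (X : word) (g : pos X) (Hg : ~ wlt X g g) :
  interval_emb (suffix g) X (@proj1_sig _ _) (exist _ g Hg).
Proof.
split; [|split; [|split]].
- intros p q; reflexivity.
- intros p y Hy _; exists (exist _ y Hy); reflexivity.
- intros p; reflexivity.
- intros [p Hp]; exact Hp.
Qed.

Lemma aligned_lex_le_init_emb (X W Y : word) e : ordered X -> ordered W ->
  init_emb X W e -> (forall z, (exists p, z = e p) \/ (forall p, wlt W (e p) z)) ->
  aligned_lex_le W Y -> aligned_lex_le X Y.
Proof.
intros HX HW He Hsplit [HP|[z [y [Hal L]]]].
- left; intros p; destruct (HP (e p)) as [q Hq].
  exists q; apply (matched_init_emb _ _ HX He); exact Hq.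
- destruct (Hsplit z) as [[p ->]|Hall].
  + right; exists p, y; split; [apply (aligned_init_emb _ _ HX He); exact Hal|].
    rewrite -(proj2 (proj2 He) p); exact L.
  + left; intros p; destruct (proj1 Hal (e p) (Hall p)) as [q _ Hq].
    exists q; apply (matched_init_emb _ _ HX He); exact Hq.
Qed.

Variables (a : wo) (u : car a -> word).
Hypothesis Ha : well_ordered a.
Hypothesis Hu : forall b, ordered (u b).
Local Notation W := (wprod a u).

Definition block_pos (b : car a) (p : pos (u b)) : pos W :=
  existT (fun b => car (wshape (u b))) b p.
Arguments block_pos : clear implicits.

Lemma block_pos_lt b p p' : wlt W (block_pos b p) (block_pos b p') <-> wlt (u b) p p'.
Proof. apply (wo_sum_same (B := fun b => wshape (u b))); apply (wf_irrefl (proj1 Ha)). Qed.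

Lemma block_pos_lt_block b b' p p' : rel a b b' -> wlt W (block_pos b p) (block_pos b' p').
Proof. intros H; apply left_lex; exact H. Qed.

Lemma block_pos_lt_inv b b' p p' :
  wlt W (block_pos b p) (block_pos b' p') -> rel a b b' \/ b = b'.
Proof.
intros H; destruct (wo_sum_inv H) as [L|[b1 [q [q' [E1 [E2 _]]]]]]; [left; exact L|right].
apply (f_equal (@projT1 _ _)) in E1, E2; simpl in E1, E2; congruence.
Qed.

Lemma first_block_init_emb b0 : (forall b, ~ rel a b b0) -> init_emb (u b0) W (block_pos b0).
Proof.
intros Hb0; split; [|split].
- intros p q; symmetry; apply block_pos_lt.
- intros p [b q] Hy; change (existT _ b q) with (block_pos b q) in Hy.
  destruct (block_pos_lt_inv Hy) as [L|<-]; [destruct (Hb0 _ L)|exists q; reflexivity].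
- intros p; reflexivity.
Qed.

Lemma aligned_lex_le_first_block b0 (Y : word) : (forall b, ~ rel a b b0) ->
  aligned_lex_le W Y -> aligned_lex_le (u b0) Y.
Proof.
intros Hb0.
apply (aligned_lex_le_init_emb (Hu b0) (well_ordered_wprod Ha Hu) (first_block_init_emb Hb0)).
intros [b p]; destruct (classic (b = b0)) as [->|Hb]; [left; exists p; reflexivity|right].
intros p'; apply block_pos_lt_block.
destruct (proj1 (proj2 Ha) b b0) as [L|[E|L]]; [destruct (Hb0 _ L)|contradiction|exact L].
Qed.

Lemma wprod_iso_wpow (m : word) : ordered m ->
  (forall b, aligned_prefix (u b) m) -> (forall b q, exists p, matched (u b) m p q) ->
  word_iso W (wpow m a).
Proof.
intros Hm Hpre Hcov.
apply (word_iso_wpow (R := fun (q : pos W) (k : car a) (r : pos m) =>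
         projT1 q = k /\ matched (u (projT1 q)) m (projT2 q) r));
  [exact (well_ordered_wprod Ha Hu) | exact Ha | exact Hm | | | |].
- intros [b p]; destruct (Hpre b p) as [r Hr]; exists b, r; split; [reflexivity | exact Hr].
- intros k r; destruct (Hcov k r) as [p Hp].
  exists (block_pos k p); split; [reflexivity | exact Hp].
- intros [b p] k r [b' p'] k' r' [E1 H1] [E2 H2]; simpl in *; subst k k'.
  change (existT _ b p) with (block_pos b p); change (existT _ b' p') with (block_pos b' p').
  split.
  + intros L; destruct (block_pos_lt_inv L) as [L'|<-]; [left; exact L'|right].
    split; [reflexivity|]; apply block_pos_lt in L.
    exact (proj1 (matched_lt (Hu b) Hm H2 H1) L).
  + intros [L|[<- L]]; [apply block_pos_lt_block; exact L|].
    apply block_pos_lt; exact (proj2 (matched_lt (Hu b) Hm H2 H1) L).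
- intros [b p] k r [_ H]; exact (matched_lab H).
Qed.

Section SuffixAtBlock.
Variables (bs : car a) (p0 : pos (u bs)).
Hypothesis Hp0 : forall p, ~ wlt (u bs) p p0.
Local Notation S := (suffix (block_pos bs p0)).

Lemma not_lt_block_start k p : ~ rel a k bs -> ~ wlt W (block_pos k p) (block_pos bs p0).
Proof.
intros Hk H; destruct (wo_sum_inv H) as [L|[b [q [q' [E1 [E2 L]]]]]]; [exact (Hk L)|].
injection E2 as <- E2; apply inj_pairT2 in E2; subst q'; exact (Hp0 L).
Qed.

Definition suffix_block_pos k (Hk : ~ rel a k bs) (p : pos (u k)) : pos S :=
  exist _ (block_pos k p) (not_lt_block_start (p := p) Hk).

Lemma suffix_block_pos_irrel k (Hk Hk' : ~ rel a k bs) p :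
  suffix_block_pos Hk p = suffix_block_pos Hk' p.
Proof. unfold suffix_block_pos; f_equal; apply proof_irrelevance. Qed.

Lemma suffix_block_pos_surj (y : pos S) : exists k (Hk : ~ rel a k bs) p, y = suffix_block_pos Hk p.
Proof.
destruct y as [[k p] Hy].
assert (Hk : ~ rel a k bs) by (intros L; apply Hy; apply left_lex; exact L).
exists k, Hk, p; unfold suffix_block_pos; f_equal; apply proof_irrelevance.
Qed.

Lemma suffix_block_pos_lt k k' (Hk : ~ rel a k bs) (Hk' : ~ rel a k' bs) p p' :
  wlt S (suffix_block_pos Hk p) (suffix_block_pos Hk' p') <->
  wlt W (block_pos k p) (block_pos k' p').
Proof. reflexivity. Qed.

Lemma suffix_block_interval_emb k (Hk : ~ rel a k bs) pk : (forall p, ~ wlt (u k) p pk) ->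
  interval_emb (u k) S (suffix_block_pos Hk) pk.
Proof.
intros Hpk; split; [|split; [|split]]; [| |reflexivity|exact Hpk].
- intros p q; rewrite suffix_block_pos_lt block_pos_lt; reflexivity.
- intros p y Hy1 Hy2; destruct (suffix_block_pos_surj y) as [k' [Hk' [q ->]]].
  rewrite suffix_block_pos_lt in Hy1 Hy2.
  destruct (block_pos_lt_inv Hy2) as [L|<-].
  { exfalso; apply Hy1; apply block_pos_lt_block; exact L. }
  exists q; apply suffix_block_pos_irrel.
Qed.

Lemma suffix_first_block_init_emb (Hbs : ~ rel a bs bs) :
  init_emb (u bs) S (suffix_block_pos Hbs).
Proof.
split; [|split]; [|intros p y Hy|reflexivity].
- intros p q; rewrite suffix_block_pos_lt block_pos_lt; reflexivity.
- destruct (suffix_block_pos_surj y) as [k' [Hk' [q ->]]]; rewrite suffix_block_pos_lt in Hy.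
  destruct (block_pos_lt_inv Hy) as [L | ->]; [exfalso; exact (Hk' L)|].
  exists q; apply suffix_block_pos_irrel.
Qed.

End SuffixAtBlock.
End Blocks.
Arguments block_pos {d A a} u b p.
Arguments suffix_block_pos {d A a} u {bs p0} Hp0 {k} Hk p.

(** * A prime word is not below a power of a proper prefix of itself *)

Section ShortTail.
Context {d : Order.disp_t} {A : finOrderType d}.
Local Notation word := (@word d A).
Local Notation ordered X := (well_ordered (wshape X)).

(* From block [bs] on, every block is matched exactly onto the proper prefix
   [x[0,cs)] of the prime word [x]; [S] is the suffix of the product starting at
   block [bs]. *)
Variables (a : wo) (u : car a -> word) (x : word) (bs : car a) (p0 : pos (u bs)) (cs : pos x).
Hypotheses (Ha : is_wo a) (Hu : forall b, valid (u b)) (Hx : valid x) (Hxprime : prime_word x).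
Hypothesis Hp0 : forall p, ~ wlt (u bs) p p0.
Hypothesis Hcover :
  forall k, ~ rel a k bs -> forall q, wlt x q cs -> exists p, matched (u k) x p q.
Hypothesis Hinside :
  forall k, ~ rel a k bs -> forall p, exists2 q, wlt x q cs & matched (u k) x p q.

Local Notation S := (suffix (block_pos u bs p0)).
Local Notation spos := (suffix_block_pos u Hp0).

Let Ha' : well_ordered a := is_wo_well_ordered Ha.
Let Hirr : forall k, ~ rel a k k := wf_irrefl (proj1 Ha').
Arguments Hirr : clear implicits.
Let Huo : forall b, ordered (u b) := fun b => is_wo_well_ordered (Hu b).
Let Hxo : ordered x := is_wo_well_ordered Hx.
Let HS : ordered S := well_ordered_suffix _ (well_ordered_wprod Ha' Huo).

Lemma first_block_aligned_matched (Hbs : ~ rel a bs bs) q p :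
  aligned x S q (spos Hbs p) -> matched (u bs) x p q.
Proof.
intros Hal.
apply (aligned_init_emb_r _ _ (Huo bs) HS Hxo (suffix_first_block_init_emb Ha' Hp0 Hbs)) in Hal.
destruct (Hinside Hbs p) as [r _ Hr].
rewrite (aligned_self Hxo (aligned_matched_trans Hxo Hal Hr)); exact Hr.
Qed.

Lemma block_start_proper k (Hk : ~ rel a k bs) pk gq : k <> bs ->
  aligned x S gq (spos Hk pk) -> proper_pos gq.
Proof.
intros Hkbs Hal; apply NNPP; intros Hmin.
assert (Hal0 : aligned x S gq (spos (Hirr bs) p0)).
{ split; [intros q Hq; exfalso; apply Hmin; exists q; exact Hq|].
  intros [y Hy] L; exfalso; exact (Hy L). }
apply Hkbs; exact (f_equal (fun y : pos S => projT1 (proj1_sig y)) (aligned_fun Hxo HS Hal Hal0)).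
Qed.

Lemma le_suffix_at_block_start k (Hk : ~ rel a k bs) pk gq : k <> bs ->
  aligned x S gq (spos Hk pk) -> aligned_lex_le x (suffix gq).
Proof.
intros Hkbs Hal; apply (aligned_lex_le_of_lex_le Hxo (well_ordered_suffix _ Hxo)).
exact (proj2 Hxprime gq (block_start_proper Hkbs Hal)).
Qed.

Lemma block_start_le k (Hk : ~ rel a k bs) p q pk : (forall p, ~ wlt (u k) p pk) ->
  aligned x S q (spos Hk p) -> exists2 gq, ~ wlt x q gq & aligned x S gq (spos Hk pk).
Proof.
intros Hpk Hal; apply (aligned_le_down Hxo HS Hal).
rewrite suffix_block_pos_lt (block_pos_lt Ha'); apply Hpk.
Qed.

Lemma not_aligned_str_lt_tail : ~ aligned_str_lt x S.
Proof.
intros [q [y [Hal L]]]; destruct (suffix_block_pos_surj Hp0 y) as [k [Hk [p ->]]].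
destruct (wf_bottom (proj1 (Huo k)) p) as [pk Hpk].
destruct (block_start_le Hpk Hal) as [gq Hqg Halg].
destruct (classic (k = bs)) as [->|Hkbs].
- rewrite -(matched_lab (first_block_aligned_matched Hal)) ltxx in L; discriminate.
- assert (Hgq : ~ wlt x gq gq) by apply (wf_irrefl (proj1 Hxo)).
  pose proof (well_ordered_suffix gq Hxo) as HX.
  pose proof (aligned_interval_emb HX Hxo (Huo k) HS (suffix_interval_emb Hgq)
    (suffix_block_interval_emb Ha' Hp0 Hk Hpk) Halg (p := exist _ q Hqg) Hal) as Hal'.
  destruct (Hinside Hk p) as [r _ Hr].
  apply (aligned_lex_le_str_ltF Hxo HX (le_suffix_at_block_start Hkbs Halg)).
  exists (exist _ q Hqg), r; split; [exact (aligned_matched_trans HX Hal' Hr)|].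
  rewrite -(matched_lab Hr); exact L.
Qed.

Lemma block_matched_to_first k (Hk : ~ rel a k bs) p : exists r, matched (u k) (u bs) p r.
Proof.
destruct (Hinside Hk p) as [q Hq Hm]; destruct (Hcover (Hirr bs) Hq) as [r Hr].
exists r; exact (matched_trans (Huo k) Hm (matched_sym (Huo bs) Hr)).
Qed.

Lemma block_matched_from_first k (Hk : ~ rel a k bs) r : exists p, matched (u k) (u bs) p r.
Proof.
destruct (Hinside (Hirr bs) r) as [q Hq Hm]; destruct (Hcover Hk Hq) as [p Hp].
exists p; exact (matched_trans (Huo k) Hp (matched_sym (Huo bs) Hm)).
Qed.

Definition tail_hit (k : car a) : Prop :=
  exists q (Hk : ~ rel a k bs) p, matched x S q (spos Hk p).

Section PrefixOfTail.
Hypothesis HP : aligned_prefix x S.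

Lemma tail_hit_at q : exists k (Hk : ~ rel a k bs) p, tail_hit k /\ matched x S q (spos Hk p).
Proof.
destruct (HP q) as [y Hy]; destruct (suffix_block_pos_surj Hp0 y) as [k [Hk [p ->]]].
exists k, Hk, p; split; [exists q, Hk, p|]; exact Hy.
Qed.

Lemma tail_hit_max_first : ~ (forall k, tail_hit k -> k = bs \/ rel a k bs).
Proof.
intros Hmax; destruct (tail_hit_at cs) as [k [Hk [p [Hhit Hm]]]].
destruct (Hmax k Hhit) as [->|L]; [|exact (Hk L)].
destruct (Hinside Hk p) as [r Hr Hpr].
rewrite -(matched_fun (Huo bs) Hxo (first_block_aligned_matched (matched_aligned Hm)) Hpr) in Hr.
exact (wf_irrefl (proj1 Hxo) Hr).
Qed.

Lemma tail_hit_max kl : kl <> bs -> tail_hit kl -> ~ (forall k, tail_hit k -> k = kl \/ rel a k kl).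
Proof.
intros Hklbs [q1 [Hkl [p1 Hm1]]] Hmax.
destruct (wf_bottom (proj1 (Huo kl)) p1) as [pl Hpl].
destruct (block_start_le Hpl (matched_aligned Hm1)) as [gq _ Halg].
assert (Hgq : ~ wlt x gq gq) by apply (wf_irrefl (proj1 Hxo)).
pose proof (well_ordered_suffix gq Hxo) as HX.
refine (not_aligned_lex_le_below (cs := cs) Hxo _ (le_suffix_at_block_start Hklbs Halg)).
intros [q Hq]; destruct (tail_hit_at q) as [k [Hk [p [Hhit Hm]]]].
destruct (Hmax k Hhit) as [->|L].
- rewrite (suffix_block_pos_irrel Hp0 Hk Hkl) in Hm.
  apply (matched_interval_emb HX Hxo (Huo kl) HS (suffix_interval_emb Hgq)
    (suffix_block_interval_emb Ha' Hp0 Hkl Hpl) Halg (exist _ q Hq) p) in Hm.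
  destruct (Hinside Hkl p) as [r Hr Hpr]; exists r; [exact Hr | exact (matched_trans HX Hm Hpr)].
- exfalso; apply Hq; apply (aligned_lt_r Hxo HS Halg Hm).
  rewrite suffix_block_pos_lt; apply block_pos_lt_block; exact L.
Qed.

Lemma tail_hit_next k : tail_hit k -> exists2 k', tail_hit k' & rel a k k'.
Proof.
intros Hk; apply NNPP; intros N.
assert (Hmax : forall k', tail_hit k' -> k' = k \/ rel a k' k).
{ intros k' Hk'; destruct (proj1 (proj2 Ha') k' k) as [L|[E|L]]; auto.
  exfalso; apply N; exists k'; assumption. }
destruct (classic (k = bs)) as [->|Hkbs]; [exact (tail_hit_max_first Hmax)|].
exact (tail_hit_max Hkbs Hk Hmax).
Qed.

Definition tail_rel (q : pos x) (k : car (subwo a tail_hit)) (r : pos (u bs)) : Prop :=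
  exists (Hk : ~ rel a (proj1_sig k) bs) p,
    matched x S q (spos Hk p) /\ matched (u (proj1_sig k)) (u bs) p r.

Lemma word_iso_tail_power : word_iso x (wpow (u bs) (subwo a tail_hit)).
Proof.
apply (word_iso_wpow (R := tail_rel) Hxo (is_wo_well_ordered (is_wo_subwo _ Ha)) (Huo bs)).
- intros q; destruct (tail_hit_at q) as [k [Hk [p [Hhit Hm]]]].
  destruct (block_matched_to_first Hk p) as [r Hr].
  exists (exist _ k Hhit), r, Hk, p; split; assumption.
- intros [k Hhit] r; pose proof Hhit as [_ [Hk _]].
  destruct (block_matched_from_first Hk r) as [p Hp].
  destruct (tail_hit_next Hhit) as [k' [q' [Hk' [p' Hm']]] Hkk'].
  destruct (matched_down Hm' (q' := spos Hk p)) as [q _ Hm].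
  + rewrite suffix_block_pos_lt; apply block_pos_lt_block; exact Hkk'.
  + exists q, Hk, p; split; assumption.
- intros q [k Hhit] r q' [k' Hhit'] r' [Hk [p [Hm Hr]]] [Hk' [p' [Hm' Hr']]].
  rewrite (matched_lt Hxo HS Hm' Hm) suffix_block_pos_lt; split.
  + intros L; destruct (block_pos_lt_inv L) as [L'|E]; [left; exact L'|right].
    simpl in E; subst k'; split; [f_equal; apply proof_irrelevance|].
    apply (block_pos_lt Ha') in L; exact (proj1 (matched_lt (Huo k) (Huo bs) Hr' Hr) L).
  + intros [L|[E L]]; [apply block_pos_lt_block; exact L|].
    apply (f_equal (@proj1_sig _ _)) in E; simpl in E; subst k'.
    apply (block_pos_lt Ha'); exact (proj2 (matched_lt (Huo k) (Huo bs) Hr' Hr) L).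
- intros q k r [Hk [p [Hm Hr]]]; rewrite (matched_lab Hm); exact (matched_lab Hr).
Qed.

End PrefixOfTail.

Lemma not_aligned_lex_le_tail : ~ aligned_lex_le x S.
Proof.
intros [HP|HS']; [|exact (not_aligned_str_lt_tail HS')].
destruct (proj1 Hxprime _ _ (Hu bs) (is_wo_subwo _ Ha) (word_iso_tail_power HP)) as [Hone _].
destruct (tail_hit_at HP cs) as [k [_ [_ [Hhit _]]]].
destruct (tail_hit_next HP Hhit) as [k' Hhit' Hkk'].
pose proof (wo_iso_one_eq (a := subwo a tail_hit) (exist _ k Hhit) (exist _ k' Hhit') Hone) as E.
apply (f_equal (@proj1_sig _ _)) in E; simpl in E; subst k'; exact (Hirr k Hkk').
Qed.

End ShortTail.

(** * Nonincreasing products of prime words *)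

Section NonincreasingPrimes.
Context {d : Order.disp_t} {A : finOrderType d}.
Local Notation word := (@word d A).
Local Notation ordered X := (well_ordered (wshape X)).

Variables (a : wo) (u : car a -> word) (b0 : car a).
Hypotheses (Ha : is_wo a) (Hu : forall b, valid (u b)) (Hprime : forall b, prime_word (u b)).
Hypothesis Hni : nonincreasing u.
Hypothesis Hb0 : forall b, ~ rel a b b0.
Local Notation W := (wprod a u).
Local Notation x := (u b0).
Hypothesis HW : forall g : pos W, proper_pos g -> aligned_lex_le W (suffix g).

Let Ha' : well_ordered a := is_wo_well_ordered Ha.
Let Huo : forall b, ordered (u b) := fun b => is_wo_well_ordered (Hu b).
Let HWo : ordered W := well_ordered_wprod Ha' Huo.

Lemma first_block_lt b : b <> b0 -> rel a b0 b.
Proof.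
intros Hb; destruct (proj1 (proj2 Ha') b b0) as [L|[E|L]]; [destruct (Hb0 L)|contradiction|exact L].
Qed.

Lemma block_not_str_lt_first b : b <> b0 -> ~ aligned_str_lt (u b) x.
Proof.
intros Hb [p [q [Hal L]]].
destruct (wf_bottom (proj1 (Huo b)) p) as [p0 Hp0].
assert (Hbb : ~ rel a b b) by apply (wf_irrefl (proj1 Ha')).
pose proof (well_ordered_suffix (block_pos u b p0) HWo) as HS.
refine (aligned_lex_le_str_ltF HWo HS (HW _) _).
- exists (block_pos u b0 q); apply block_pos_lt_block; exact (first_block_lt Hb).
- exists (suffix_block_pos u Hp0 Hbb p), (block_pos u b0 q); split; [|exact L].
  apply (aligned_init_emb_r _ _ (Huo b0) HWo HS (first_block_init_emb u Ha' Hb0)).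
  apply (aligned_init_emb _ _ (Huo b) (suffix_first_block_init_emb Ha' Hp0 Hbb)); exact Hal.
Qed.

Lemma block_aligned_prefix b : aligned_prefix (u b) x.
Proof.
destruct (classic (b = b0)) as [->|Hb]; [intros p; exists p; exact (matched_refl p (Huo b0))|].
destruct (aligned_lex_le_of_lex_le (Huo b) (Huo b0) (Hni (first_block_lt Hb))) as [H|H]; [exact H|].
destruct (block_not_str_lt_first Hb H).
Qed.

Definition covered (b : car a) (q : pos x) : Prop := exists p, matched (u b) x p q.

Section LeastUncovered.
Variables (bs : car a) (cs : pos x).
Hypothesis Hcs : ~ covered bs cs.
Hypothesis Hmin : forall q, wlt x q cs -> forall b, covered b q.

Lemma covered_lt_least q : covered bs q -> wlt x q cs.
Proof.
intros [p Hpq]; destruct (proj1 (proj2 (Huo b0)) q cs) as [L|[E|L]]; [exact L|exfalso; apply Hcs..].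
- subst q; exists p; exact Hpq.
- destruct (matched_down Hpq L) as [p' _ Hm]; exists p'; exact Hm.
Qed.

Lemma uncovered_block_not_first : bs <> b0.
Proof. intros ->; apply Hcs; exists cs; exact (matched_refl cs (Huo b0)). Qed.

Lemma tail_covered_lt k : ~ rel a k bs -> forall p q, matched (u k) x p q -> wlt x q cs.
Proof.
intros Hk p q Hpq.
destruct (classic (k = bs)) as [->|Hkbs]; [apply covered_lt_least; exists p; exact Hpq|].
assert (Hbsk : rel a bs k).
{ destruct (proj1 (proj2 Ha') k bs) as [L|[E|L]]; [contradiction..|exact L]. }
destruct (aligned_lex_le_of_lex_le (Huo k) (Huo bs) (Hni Hbsk)) as [HP|HS].
- destruct (HP p) as [p' Hp']; destruct (block_aligned_prefix (b := bs) p') as [q' Hq'].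
  rewrite (matched_fun (Huo k) (Huo b0) Hpq (matched_trans (Huo k) Hp' Hq')).
  apply covered_lt_least; exists p'; exact Hq'.
- exfalso; exact (common_prefix_not_str_lt (Huo k) (Huo b0)
    (@block_aligned_prefix k) (@block_aligned_prefix bs) HS).
Qed.

Lemma least_uncovered_absurd : False.
Proof.
destruct (primitive_inhabited (Hu bs) (proj1 (Hprime bs))) as [p].
destruct (wf_bottom (proj1 (Huo bs)) p) as [p0 Hp0].
refine (not_aligned_lex_le_tail (cs := cs) Ha Hu (Hu b0) (Hprime b0) Hp0
  (fun k _ q Hq => Hmin Hq k) (fun k Hk p => _) _).
- destruct (block_aligned_prefix (b := k) p) as [q Hq].
  exists q; [exact (tail_covered_lt Hk Hq) | exact Hq].
- apply (aligned_lex_le_first_block Ha' Huo Hb0); apply HW.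
  exists (block_pos u b0 cs); apply block_pos_lt_block.
  exact (first_block_lt uncovered_block_not_first).
Qed.

End LeastUncovered.

Lemma blocks_cover b q : covered b q.
Proof.
apply NNPP; intros Hbq.
destruct (wf_min (P := fun q => exists b, ~ covered b q) (proj1 (Huo b0))
  (ex_intro _ q (ex_intro _ b Hbq))) as [cs [[bs Hcs] Hmin]].
apply (least_uncovered_absurd Hcs); intros q' Hq' b'; apply NNPP; intros N.
exact (Hmin q' Hq' (ex_intro _ b' N)).
Qed.

End NonincreasingPrimes.
Arguments block_aligned_prefix {d A a u b0} Ha Hu Hni Hb0 HW b p.

Theorem mainTheorem17 (d : Order.disp_t) (A : finOrderType d)
  (a : wo) (u : car a -> @word d A) :
  is_wo a ->
  (forall b, valid (u b)) ->
  (forall b, prime_word (u b)) ->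
  nonincreasing u ->
  (exists b1 b2 : car a, b1 <> b2) ->
  ~ prime_word (wprod a u).
Proof.
intros Ha Hu Hp Hni [b1 [b2 Hb12]] [Hprim Hsuffix].
pose proof (is_wo_well_ordered Ha) as Ha'.
pose proof (fun b => is_wo_well_ordered (Hu b)) as Huo.
destruct (wf_bottom (proj1 Ha') b1) as [b0 Hb0].
assert (HW : forall g : pos (wprod a u), proper_pos g -> aligned_lex_le (wprod a u) (suffix g)).
{ intros g Hg; apply (aligned_lex_le_of_lex_le (well_ordered_wprod Ha' Huo)).
  - exact (well_ordered_suffix g (well_ordered_wprod Ha' Huo)).
  - exact (Hsuffix g Hg). }
destruct (Hprim (u b0) a (Hu b0) Ha (wprod_iso_wpow Ha' Huo (Huo b0)
  (block_aligned_prefix Ha Hu Hni Hb0 HW) (blocks_cover Ha Hu Hp Hni Hb0 HW))) as [Hone _].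
exact (Hb12 (wo_iso_one_eq b1 b2 Hone)).
Qed.
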